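(* Let $\theta>1$ be real and let $n$ be a positive integer with $n>\log_2\theta$. Then exactly one of the following holds: (i) $M_\theta(n)=\left\lfloor \frac{n}{\log\theta}-\frac12\right\rfloor$ and $n\notin\mathcal A_\theta$; (ii) $M_\theta(n)=\left\lfloor \frac{n}{\log\theta}+\frac12\right\rfloor$ and $n\in\mathcal A_\theta$.
   Context: $\lfloor x\rfloor$ is the floor of $x$ and $\{x\}=x-\lfloor x\rfloor$ its fractional part; $\log$ is the natural logarithm. For real $\theta>1$ and positive integer $n$, $M_\theta(n)=\left\lfloor 1/\{\theta^{1/n}\}\right\rfloor$ and $M'_\theta(n)=\left\lfloor 1/(\theta^{1/n}-1)\right\rfloor$. The set of atypical numbers is $\mathcal A_\theta=\{n\in\mathbb N: M'_\theta(n)\neq \lfloor n/\log\theta-1/2\rfloor\}$, where $\mathbb N$ is the set of positive integers. *)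

From Stdlib Require Import Reals ZArith.
Open Scope R_scope.

(* zfloor x : the greatest integer <= x  (up x is the least integer > x) *)
Definition zfloor (x : R) : Z := (up x - 1)%Z.

Arguments zfloor x%_R.
Definition frac (x : R) : R := x - IZR (zfloor x).

Definition root_n (theta : R) (n : nat) : R := Rpower theta (/ INR n).

Definition M (theta : R) (n : nat) : Z := zfloor (/ frac (root_n theta n)).

Definition M' (theta : R) (n : nat) : Z := zfloor (/ (root_n theta n - 1)).

Definition atypical (theta : R) (n : nat) : Prop :=
  (0 < n)%nat /\ M' theta n <> zfloor (INR n / ln theta - / 2).

(* With t := log theta / n we have 0 < t < log 2, so theta^(1/n) = e^t lies in
   (1, 2); hence {theta^(1/n)} = e^t - 1 and M_theta(n) = M'_theta(n).  The
   elementary bounds 1/t - 1/2 <= 1/(e^t - 1) < 1/t trap M'_theta(n) between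
   floor(1/t - 1/2) and floor(1/t + 1/2) = floor(1/t - 1/2) + 1, and n is
   atypical exactly when the upper value is taken. *)

From Stdlib Require Import Reals ZArith Lra Lia.
From Coquelicot Require Import Coquelicot.
Open Scope R_scope.

Lemma zfloor_spec (x : R) : IZR (zfloor x) <= x < IZR (zfloor x) + 1.
Proof.
unfold zfloor; destruct (archimed x); rewrite minus_IZR; lra.
Qed.

Lemma zfloor_unique (x : R) (k : Z) : IZR k <= x < IZR k + 1 -> zfloor x = k.
Proof.
intros [Hk Hk1]; unfold zfloor.
rewrite <- (tech_up x (k + 1)); [lia | rewrite plus_IZR; lra | rewrite plus_IZR; lra].
Qed.

Lemma zfloor_le (x y : R) : x <= y -> (zfloor x <= zfloor y)%Z.
Proof.
intro Hxy; destruct (Z_le_gt_dec (zfloor x) (zfloor y)) as [|Hgt]; auto.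
assert (Hle : (zfloor y + 1 <= zfloor x)%Z) by lia.
apply IZR_le in Hle; rewrite plus_IZR in Hle.
pose proof (zfloor_spec x); pose proof (zfloor_spec y); lra.
Qed.

Lemma zfloor_add1 (x : R) : zfloor (x + 1) = (zfloor x + 1)%Z.
Proof.
apply zfloor_unique; rewrite plus_IZR; pose proof (zfloor_spec x); lra.
Qed.

Lemma zfloor_window (a y : R) : a <= y <= a + 1 ->
  zfloor y = zfloor a \/ zfloor y = (zfloor a + 1)%Z.
Proof.
intros [Hay Hya].
apply zfloor_le in Hay; apply zfloor_le in Hya; rewrite zfloor_add1 in Hya; lia.
Qed.

Lemma frac_of_1_2 (x : R) : 1 <= x < 2 -> frac x = x - 1.
Proof.
intro Hx; unfold frac; rewrite (zfloor_unique x 1); [reflexivity | simpl; lra].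
Qed.

Definition pade_gap (t : R) : R := (2 + t) * exp (- t / 2) - (2 - t) * exp (t / 2).

Lemma pade_gap_derive (t : R) :
  derivable_pt_lim pade_gap t (t / 2 * (exp (t / 2) - exp (- t / 2))).
Proof.
apply is_derive_Reals; unfold pade_gap; auto_derive; auto.
unfold Rdiv; field.
Qed.

Lemma pade_gap_increasing : increasing pade_gap.
Proof.
pose (pr := fun t => exist _ _ (pade_gap_derive t) : derivable_pt pade_gap t).
apply (nonneg_derivative_1 pade_gap pr); intro t; simpl.
destruct (Rle_lt_dec 0 t) as [Ht | Ht].
- apply Rmult_le_pos; [lra |].
  enough (exp (- t / 2) <= exp (t / 2)) by lra.
  destruct (Req_dec t 0) as [->|]; [right; f_equal; field | left; apply exp_increasing; lra].
- assert (exp (t / 2) < exp (- t / 2)) by (apply exp_increasing; lra).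
  assert (t / 2 < 0) by lra.
  nra.
Qed.

(* The diagonal Pade bound e^t <= (2 + t) / (2 - t), multiplied out. *)
Lemma sub2_mul_exp_le (t : R) : 0 <= t -> (2 - t) * exp t <= 2 + t.
Proof.
intro Ht; pose proof (pade_gap_increasing 0 t Ht) as Hgap.
unfold pade_gap in Hgap.
replace (- 0 / 2) with 0 in Hgap by field; replace (0 / 2) with 0 in Hgap by field.
rewrite exp_0 in Hgap.
assert (Hinv : exp (- t / 2) * exp (t / 2) = 1)
  by (rewrite <- exp_plus, <- exp_0; f_equal; field).
assert (Hsq : exp (t / 2) * exp (t / 2) = exp t)
  by (rewrite <- exp_plus; f_equal; field).
pose proof (exp_pos (t / 2)).
nra.
Qed.

Lemma inv_expm1_lt_inv (t : R) : 0 < t -> / (exp t - 1) < / t.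
Proof.
intro Ht; pose proof (exp_ineq1 t ltac:(lra)).
apply Rinv_lt_contravar; nra.
Qed.

Lemma inv_sub_half_le_inv_expm1 (t : R) : 0 < t -> / t - / 2 <= / (exp t - 1).
Proof.
intro Ht; pose proof (exp_ineq1 t ltac:(lra)); pose proof (sub2_mul_exp_le t (Rlt_le _ _ Ht)).
replace (/ t - / 2) with ((2 - t) / (2 * t)) by (field; lra).
apply (Rmult_le_reg_r (2 * t * (exp t - 1))); [nra |].
replace (/ (exp t - 1) * (2 * t * (exp t - 1))) with (2 * t) by (field; lra).
replace ((2 - t) / (2 * t) * (2 * t * (exp t - 1))) with ((2 - t) * (exp t - 1))
  by (field; lra).
lra.
Qed.

Lemma root_n_exp (theta : R) (n : nat) :
  0 < theta -> root_n theta n = exp (ln theta / INR n).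
Proof.
intro; unfold root_n, Rpower; f_equal; unfold Rdiv; ring.
Qed.

Lemma M'_zfloor_expm1 (theta : R) (n : nat) :
  0 < theta -> M' theta n = zfloor (/ (exp (ln theta / INR n) - 1)).
Proof.
intro; unfold M'; rewrite root_n_exp; auto.
Qed.

Lemma M_eq_M' (theta : R) (n : nat) :
  0 < theta -> 0 < ln theta / INR n < ln 2 -> M theta n = M' theta n.
Proof.
intros Htheta [Ht Ht2]; unfold M, M'; rewrite root_n_exp by assumption.
pose proof (exp_ineq1 (ln theta / INR n) ltac:(lra)).
assert (exp (ln theta / INR n) < 2) by (rewrite <- (exp_ln 2) by lra; apply exp_increasing; lra).
rewrite frac_of_1_2 by lra; reflexivity.
Qed.

Lemma ln_ratio_bounds (theta : R) (n : nat) :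
  1 < theta -> (0 < n)%nat -> ln theta / ln 2 < INR n ->
  0 < ln theta / INR n < ln 2.
Proof.
intros Htheta Hn Hlt.
assert (0 < ln theta) by (rewrite <- ln_1; apply ln_increasing; lra).
assert (0 < ln 2) by (rewrite <- ln_1; apply ln_increasing; lra).
assert (0 < INR n) by (apply lt_0_INR; lia).
split; [apply Rdiv_lt_0_compat; lra |].
apply (Rmult_lt_reg_r (INR n)); [assumption |].
apply (Rmult_lt_reg_l (/ ln 2)); [apply Rinv_0_lt_compat; lra |].
replace (/ ln 2 * (ln theta / INR n * INR n)) with (ln theta / ln 2) by (field; lra).
replace (/ ln 2 * (ln 2 * INR n)) with (INR n) by (field; lra).
assumption.
Qed.

Lemma zfloor_add_half (y : R) : zfloor (y + / 2) = (zfloor (y - / 2) + 1)%Z.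
Proof.
rewrite <- zfloor_add1; f_equal; field.
Qed.

Lemma zfloor_inv_expm1_window (t : R) : 0 < t ->
  zfloor (/ (exp t - 1)) = zfloor (/ t - / 2) \/
  zfloor (/ (exp t - 1)) = zfloor (/ t + / 2).
Proof.
intro Ht; rewrite zfloor_add_half.
apply zfloor_window; split.
- apply inv_sub_half_le_inv_expm1; assumption.
- pose proof (inv_expm1_lt_inv t Ht); lra.
Qed.

Lemma M'_window (theta : R) (n : nat) :
  1 < theta -> (0 < n)%nat -> ln theta / ln 2 < INR n ->
  M' theta n = zfloor (INR n / ln theta - / 2) \/
  M' theta n = zfloor (INR n / ln theta + / 2).
Proof.
intros Htheta Hn Hlt.
pose proof (ln_ratio_bounds theta n Htheta Hn Hlt) as [Ht _].
assert (0 < ln theta) by (rewrite <- ln_1; apply ln_increasing; lra).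
assert (0 < INR n) by (apply lt_0_INR; lia).
replace (INR n / ln theta) with (/ (ln theta / INR n)) by (field; lra).
rewrite M'_zfloor_expm1 by lra.
exact (zfloor_inv_expm1_window _ Ht).
Qed.

Theorem theorem1 (theta : R) (n : nat) :
  1 < theta -> (0 < n)%nat -> ln theta / ln 2 < INR n ->
  ((M theta n = zfloor (INR n / ln theta - / 2) /\ ~ atypical theta n) /\
   ~ (M theta n = zfloor (INR n / ln theta + / 2) /\ atypical theta n))
  \/
  ((M theta n = zfloor (INR n / ln theta + / 2) /\ atypical theta n) /\
   ~ (M theta n = zfloor (INR n / ln theta - / 2) /\ ~ atypical theta n)).
Proof.
intros Htheta Hn Hlt.
pose proof (ln_ratio_bounds theta n Htheta Hn Hlt) as Hratio.
rewrite (M_eq_M' theta n) by (assumption || lra).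
pose proof (zfloor_add_half (INR n / ln theta)).
unfold atypical.
destruct (M'_window theta n Htheta Hn Hlt) as [|]; [left | right];
  repeat split; intuition lia.
Qed.
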